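(* Let $\mathcal M$ be a smooth manifold on which the group $\mathbb{R}^p$ acts (smoothly). Assume that some full lattice $\Gamma$ of $\mathbb{R}^p$ acts freely and properly on $\mathcal M$ (via the restricted action). Then $\mathbb{R}^p$ acts freely on $\mathcal M$.
   Context: A full lattice of $\mathbb{R}^p$ is a discrete subgroup $\Gamma$ with $\mathbb{R}^p/\Gamma$ compact. *)

From HB Require Import structures.
From mathcomp Require Import all_boot all_order all_algebra generic_quotient.
From mathcomp Require Import all_classical all_reals all_analysis.
Set Implicit Arguments. Unset Strict Implicit. Unset Printing Implicit Defensive.
Import Order.TTheory GRing.Theory Num.Theory.
Import numFieldNormedType.Exports.
Local Open Scope classical_set_scope.
Local Open Scope ring_scope.

Section Lattice.
Variables (R : realType) (p : nat) (G : set 'rV[R]_p).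

Definition is_addsubgroup : Prop :=
  G 0 /\ forall x y, G x -> G y -> G (x - y).

Definition is_discrete_subset : Prop :=
  forall g, G g -> exists2 U : set 'rV[R]_p, nbhs g U & U `&` G = [set g].

(* congruence modulo the subgroup generated by G (equal to "u - v \in G"
   when G is a subgroup) *)
Definition lat_rel (u v : 'rV[R]_p) : bool :=
  `[< forall H : set 'rV[R]_p, G `<=` H -> H 0 ->
        (forall x y, H x -> H y -> H (x - y)) -> H (u - v) >].

Lemma lat_rel_refl : reflexive lat_rel.
Proof. move=> u; apply/asboolP => H _ H0 _; by rewrite subrr. Qed.

Lemma lat_rel_sym : symmetric lat_rel.
Proof.
move=> u v; apply/asboolP/asboolP => h H GH H0 Hs;
  have := Hs _ _ H0 (h H GH H0 Hs); by rewrite sub0r opprB.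
Qed.

Lemma lat_rel_trans : transitive lat_rel.
Proof.
move=> v u w /asboolP h1 /asboolP h2; apply/asboolP => H GH H0 Hs.
have a := h1 H GH H0 Hs; have b := h2 H GH H0 Hs.
have c := Hs _ _ H0 b.
have := Hs _ _ a c.
by rewrite sub0r opprK addrA subrK.
Qed.

Canonical lat_equiv := EquivRel lat_rel lat_rel_refl lat_rel_sym lat_rel_trans.

Definition lat_quotient := quotient_topology ({eq_quot lat_equiv})%qT.

Definition full_lattice : Prop :=
  [/\ is_addsubgroup, is_discrete_subset & compact [set: lat_quotient]].
End Lattice.

Section Action.
Variables (R : realType) (p : nat) (M : topologicalType)
  (act : 'rV[R]_p -> M -> M).

Definition is_cont_action : Prop :=
  [/\ forall x, act 0 x = x,
      forall u v x, act (u + v) x = act u (act v x) &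
      continuous (fun z : 'rV[R]_p * M => act z.1 z.2)].

Definition acts_freely (G : set 'rV[R]_p) : Prop :=
  forall g x, G g -> act g x = x -> g = 0.

(* proper action of G (with the subspace topology): the map
   G x M -> M x M, (g, x) |-> (g.x, x) is proper, i.e. preimages of
   compact sets are compact *)
Definition acts_properly (G : set 'rV[R]_p) : Prop :=
  forall K : set (M * M), compact K ->
    compact [set z : 'rV[R]_p * M | G z.1 /\ K (act z.1 z.2, z.2)].
End Action.

(* Since R^p / Gamma is compact, every v in R^p lies within a fixed distance B
   of Gamma. If v fixes x, write v = c + (v - c) with c in Gamma and
   |v - c| <= B; then c.x = (c - v).x lies in the compact image of the
   B-ball under the orbit map, so properness bounds |c|, and hence |v|.
   The stabilizer of x is thus a bounded subgroup of R^p, i.e. trivial. *)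

From HB Require Import structures.
From mathcomp Require Import all_boot all_order all_algebra generic_quotient.
From mathcomp Require Import all_classical all_reals all_analysis.
Import Order.TTheory GRing.Theory Num.Theory.
Import numFieldNormedType.Exports.
Local Open Scope classical_set_scope.
Local Open Scope ring_scope.
Local Open Scope quotient_scope.

Section LatticeQuotient.
Set Implicit Arguments.
Variables (R : realType) (p : nat) (G : set 'rV[R]_p).
Local Notation Q := (lat_quotient G).

Lemma lat_rel_addsubgroup u v : is_addsubgroup G -> lat_rel G u v -> G (u - v).
Proof. by move=> [G0 GB] /asboolP; apply. Qed.

Lemma lat_rel_translate u v w : lat_rel G (u + w) (v + w) = lat_rel G u v.
Proof. by rewrite /lat_rel opprD addrACA subrr addr0. Qed.

Lemma open_lat_image (U : set 'rV[R]_p) :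
  open U -> open ([set \pi_Q z | z in U] : set Q).
Proof.
move=> oU; rewrite /open /= /quotient_open openE => w [z Uz /eqmodP wz].
have /nbhs_ballP[e e0 ballU] := oU z Uz.
apply/nbhs_ballP; exists e => // w' ww'; exists (z + (w' - w)).
  apply: ballU; move: ww'; rewrite -!ball_normE /ball_ /=.
  by rewrite opprD addrA subrr sub0r opprB.
apply/eqmodP; rewrite /= -(lat_rel_translate _ _ (w - w')).
by rewrite -[w - w']opprB addrK [w' + _]addrC opprB subrK.
Qed.

Lemma full_lattice_cobounded :
  full_lattice G -> exists B : R, forall v, exists2 g, G g & `|v - g| <= B.
Proof.
case=> subG _; rewrite compact_cover => coverQ.
have [D _ coverD] : finite_subset_cover [set: 'rV[R]_p]
    (fun v => [set \pi_Q z | z in ball v 1] : set Q) [set: Q].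
  apply: coverQ => [v _|q _]; first exact/open_lat_image/ball_open.
  by exists (repr q) => //; exists (repr q); [exact: ballxx | rewrite reprK].
have /compact_bounded[N [_ boundD]] := finite_compact (finite_fset D).
exists (N + 1 + 1) => v; have [i Di [z iz /eqmodP vz]] := coverD (\pi_Q v) I.
exists (v - z); first by apply: lat_rel_addsubgroup subG _; rewrite lat_rel_sym.
have leiN : `|i| <= N + 1 by apply: boundD Di; rewrite ltrDl.
have /= ltiz : `|i - z| < 1 by move: iz; rewrite -ball_normE.
rewrite opprB addrC subrK -[z](subKr i).
exact: le_trans (ler_normB _ _) (lerD leiN (ltW ltiz)).
Qed.

End LatticeQuotient.

Lemma compact_norm_le {R : realType} {n : nat} (B : R) :
  compact [set v : 'rV[R]_n | `|v| <= B].
Proof.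
apply: bounded_closed_compact.
  exists B; split; first exact: num_real.
  by move=> N ltBN v /= leB; rewrite (le_trans leB (ltW ltBN)).
by have := (continuous_closedP (fun v : 'rV[R]_n => `|v|)).1
  norm_continuous _ (@closed_le R B).
Qed.

Lemma continuous_pair {X Y Z : topologicalType} (f : X -> Y) (g : X -> Z) :
  continuous f -> continuous g -> continuous (fun x => (f x, g x)).
Proof. by move=> fc gc x; apply: cvg_pair; [exact: fc | exact: gc]. Qed.

Lemma continuous_pairl {X Y Z : topologicalType} (h : X * Y -> Z) y :
  continuous h -> continuous (fun x => h (x, y)).
Proof.
move=> hc x; apply: (continuous_comp (f := pair^~ y)); last exact: hc.
by apply: continuous_pair => [z|]; [exact: cvg_id | exact: cst_continuous].
Qed.

Lemma natmul_bounded_eq0 {R : archiFieldType} {V : normedZmodType R}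
  (g : V) (N : R) : (forall n, `|g *+ n| <= N) -> g = 0.
Proof.
move=> bounded; case: (eqVneq g 0) => // /negPf g0; exfalso.
have gpos : 0 < `|g| by rewrite normr_gt0 g0.
have := archi_boundP (divr_ge0 (normr_ge0 N) (ltW gpos)).
rewrite ltr_pdivrMr // => ltNn.
have := bounded (Num.Def.archi_bound (`|N| / `|g|)).
rewrite normrMn -mulr_natr mulrC => /le_trans/(_ (ler_norm N)) leN.
by have := lt_le_trans ltNn leN; rewrite ltxx.
Qed.

Section ContinuousAction.
Set Implicit Arguments.
Variables (R : realType) (p : nat) (M : topologicalType)
  (act : 'rV[R]_p -> M -> M).
Hypothesis act_cont : is_cont_action act.

Lemma act_natmul_fixed g x n : act g x = x -> act (g *+ n) x = x.
Proof.
case: act_cont => act0 actD _ gx.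
by elim: n => [|n IHn]; rewrite ?mulr0n ?act0 // mulrS actD IHn gx.
Qed.

Lemma continuous_orbit_map x : continuous (act^~ x).
Proof. by case: act_cont => _ _; apply: continuous_pairl. Qed.

Lemma proper_transporter_bounded (G C : set 'rV[R]_p) x :
  acts_properly act G -> compact C ->
  exists N : R, forall c d, G c -> C d -> act c x = act d x -> `|c| <= N.
Proof.
move=> properG compactC.
pose K := [set (act d x, x) | d in C].
have compactK : compact K.
  apply: continuous_compact compactC; apply: continuous_subspaceT.
  apply: continuous_pair; [exact: continuous_orbit_map | exact: cst_continuous].
have compactT := properG K compactK.
have /compact_bounded[N [_ boundT]] : compact (fst @` [set z : 'rV[R]_p * M |
    G z.1 /\ K (act z.1 z.2, z.2)]).
  apply: continuous_compact compactT; apply: continuous_subspaceT => z.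
  exact: cvg_fst.
exists (N + 1) => c d Gc Cd cd; apply: (boundT (N + 1)); first by rewrite ltrDl.
by exists (c, x) => //; split => //; exists d; rewrite // cd.
Qed.

Lemma stabilizer_bounded (G : set 'rV[R]_p) x :
  full_lattice G -> acts_properly act G ->
  exists N : R, forall v, act v x = x -> `|v| <= N.
Proof.
move=> latG properG; case: act_cont => _ actD _.
have [B coboundG] := full_lattice_cobounded latG.
have [N transN] := proper_transporter_bounded x properG (compact_norm_le B).
exists (B + N) => v vx; have [c Gc lecB] := coboundG v.
have lecN : `|c| <= N.
  apply: (transN c (c - v)) => //=; first by rewrite -normrN opprB.
  by rewrite -[in RHS]vx -actD subrK.
by rewrite -(subrK c v); apply: le_trans (ler_normD _ _) (lerD lecB lecN).
Qed.

End ContinuousAction.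

Theorem mainTheorem2 (R : realType) (p : nat) (M : topologicalType)
  (act : 'rV[R]_p -> M -> M) (Gamma : set 'rV[R]_p) :
  hausdorff_space M ->
  is_cont_action act ->
  full_lattice Gamma ->
  acts_freely act Gamma ->
  acts_properly act Gamma ->
  acts_freely act [set: 'rV[R]_p].
Proof.
move=> _ act_cont latGamma _ properGamma g x _ gx.
have [N stabN] := stabilizer_bounded act_cont x latGamma properGamma.
by apply: (natmul_bounded_eq0 g N) => n; apply/stabN/act_natmul_fixed.
Qed.
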